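(* Let $\rho\in(0,1)$ and $1\le r\le d$. Then every $Z\in T_{\rho,r}$ satisfies $$\frac{\|Z\|_1^2}{\|Z\|_2^2}\le\left(\frac{\rho+1}{\rho}\right)^2 r.$$
   Context: $H_d$ is the real vector space of Hermitian $d\times d$ matrices; $\|\cdot\|_1$ is the nuclear norm and $\|\cdot\|_2$ the Frobenius norm. For $Z\in H_d$ let $Z_r$ be a best rank-$r$ approximation of $Z$ in nuclear norm (keep the $r$ eigenvalues of largest modulus in the spectral decomposition), and $Z_c=Z-Z_r$, so $\|Z_c\|_1=\sigma_r(Z)=\inf\{\|Z-Y\|_1:\mathrm{rank}(Y)=r\}$. Define $T_{\rho,r}=\{Z\in H_d:\ \|Z_r\|_2>\frac{\rho}{\sqrt r}\|Z_c\|_1,\ \|Z\|_2=1\}$. *)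

From HB Require Import structures.
From mathcomp Require Import all_boot all_order all_algebra.
Set Implicit Arguments. Unset Strict Implicit. Unset Printing Implicit Defensive.
Import Order.TTheory GRing.Theory Num.Theory.
Local Open Scope ring_scope.
Local Open Scope sesquilinear_scope.

(* Scalars: C is any numerically closed field (e.g. algC, or complex R); the
   paper's case is C = complex numbers. *)

Definition frob_norm {C : numClosedFieldType} (m n : nat) (A : 'M[C]_(m, n)) : C :=
  sqrtC (\sum_(i < m) \sum_(j < n) `|A i j| ^+ 2).

(* Nuclear norm ||A||_1 = sum of the singular values of A, i.e. of the square
   roots of the eigenvalues of the Hermitian PSD matrix A^* A (given by the
   library's spectral decomposition). *)
Definition nuc_norm {C : numClosedFieldType} (n : nat) (A : 'M[C]_n) : C :=
  \sum_(i < n) sqrtC (spectral_diag (A ^t* *m A) 0 i).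

(* Zr is a best rank-r approximation of the Hermitian matrix Z obtained by
   keeping, in a spectral decomposition Z = U^* diag(lam) U (U unitary, lam
   real), the r eigenvalues of largest modulus (indices S, #|S| = r). *)
Definition spectral_trunc {C : numClosedFieldType} (d r : nat)
    (Z Zr : 'M[C]_d) : Prop :=
  exists (U : 'M[C]_d) (lam : 'rV[C]_d) (S : {set 'I_d}),
    [/\ U \is unitarymx /\ lam \is a realmx,
        Z = U ^t* *m diag_mx lam *m U,
        #|S| = r,
        (forall i j, i \in S -> j \notin S -> `|lam 0 j| <= `|lam 0 i|) &
        Zr = U ^t* *m diag_mx (\row_k (if k \in S then lam 0 k else 0)) *m U].

From HB Require Import structures.
From mathcomp Require Import all_boot all_order all_algebra.
From mathcomp Require Import ring.
Import Order.TTheory GRing.Theory Num.Theory.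
Local Open Scope ring_scope.
Local Open Scope sesquilinear_scope.

(* Write Z = U^* diag(lam) U with U unitary.  Both norms are unitarily
   invariant, so ||Z||_1 = sum |lam_i| splits as ||Z_r||_1 + ||Z_c||_1 and
   ||Z_r||_2 <= ||Z||_2.  Cauchy-Schwarz over the r kept eigenvalues gives
   ||Z_r||_1 <= sqrt r ||Z_r||_2, and Z in T_{rho,r} gives
   ||Z_c||_1 <= (sqrt r / rho) ||Z_r||_2; adding,
   ||Z||_1 <= (1 + 1/rho) sqrt r ||Z||_2. *)

Lemma char_poly_similar (F : fieldType) n (P A : 'M[F]_n) : P \in unitmx ->
  char_poly (invmx P *m A *m P) = char_poly A.
Proof.
move=> P_unit; rewrite /char_poly /char_poly_mx.
have -> : 'X%:M - map_mx polyC (invmx P *m A *m P) =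
          map_mx polyC (invmx P) *m ('X%:M - map_mx polyC A) *m map_mx polyC P.
  rewrite mulmxBr mulmxBl -!map_mxM; congr (_ - _).
  by rewrite mul_mx_scalar -scalemxAl -map_mxM mulVmx // map_mx1 scalemx1.
by rewrite !det_mulmx mulrAC -det_mulmx -map_mxM mulVmx // map_mx1 det1 mul1r.
Qed.

Lemma char_poly_diag (F : fieldType) n (v : 'rV[F]_n) :
  char_poly (diag_mx v) = \prod_(i < n) ('X - (v 0 i)%:P).
Proof.
rewrite char_poly_trig ?diag_mx_is_trig //.
by apply: eq_bigr => i _; rewrite mxE eqxx mulr1n.
Qed.

Lemma similar_diag_perm_eq (F : fieldType) n (P Q : 'M[F]_n) (u v : 'rV[F]_n) :
  P \in unitmx -> Q \in unitmx ->
  invmx P *m diag_mx u *m P = invmx Q *m diag_mx v *m Q ->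
  perm_eq [seq u 0 i | i : 'I_n] [seq v 0 i | i : 'I_n].
Proof.
move=> P_unit Q_unit /(congr1 char_poly).
rewrite !char_poly_similar // !char_poly_diag -!(big_image _ _ _ _ (fun x => 'X - x%:P)).
exact: prod_XsubC_eq.
Qed.

Lemma sqr_sum_le_card_sum_sqr (R : numDomainType) (I : finType) (A : pred I)
    (x : I -> R) : (forall i, x i \is Num.real) ->
  (\sum_(i in A) x i) ^+ 2 <= #|A|%:R * \sum_(i in A) x i ^+ 2.
Proof.
move=> x_real; set a := \sum_(i in A) x i; set b := \sum_(i in A) x i ^+ 2.
have : 0 <= \sum_(i in A) \sum_(j in A) (x i - x j) ^+ 2.
  by do 2!apply: sumr_ge0 => ? _; rewrite -realEsqr rpredB.
suff -> : \sum_(i in A) \sum_(j in A) (x i - x j) ^+ 2 = (#|A|%:R * b - a ^+ 2) *+ 2.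
  by rewrite pmulrn_lge0 // subr_ge0.
under eq_bigr => i _.
  under eq_bigr => j _ do rewrite sqrrB addrAC.
  rewrite sumrB big_split /= sumr_const -/b sumrMnl -mulr_sumr.
  over.
rewrite sumrB big_split /= !sumrMnl -mulr_suml -/a -/b sumr_const.
by rewrite mulrnBl -mulr2n expr2 mulr_natl -mulrnA mulnC mulrnA.
Qed.

Definition row_mask {T : nmodType} {n} (S : {set 'I_n}) (v : 'rV[T]_n) : 'rV[T]_n :=
  \row_k (if k \in S then v 0 k else 0).

Lemma sum_row_mask {T R : nmodType} {n} (S : {set 'I_n})
    (v : 'rV[T]_n) (f : T -> R) : f 0 = 0 ->
  \sum_i f (row_mask S v 0 i) = \sum_(i in S) f (v 0 i).
Proof.
by move=> f0; rewrite [RHS]big_mkcond; apply: eq_bigr => i _; rewrite mxE; case: ifP.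
Qed.

Lemma row_maskC (T : zmodType) n (S : {set 'I_n}) (v : 'rV[T]_n) :
  v - row_mask S v = row_mask (~: S) v.
Proof.
apply/matrixP => i j; rewrite !mxE in_setC ord1.
by case: (j \in S); rewrite /= ?subrr ?subr0.
Qed.

Section UnitaryDiagonal.
Variables (C : numClosedFieldType) (n : nat) (U : 'M[C]_n).
Hypothesis U_unitary : U \is unitarymx.
Local Notation udiag mu := (U^t* *m diag_mx mu *m U).

Lemma udiag_adj (mu : 'rV[C]_n) : (udiag mu)^t* = udiag (\row_i (mu 0 i)^*).
Proof.
rewrite !trmx_mul !map_mxM trmxCK tr_diag_mx map_diag_mx mulmxA.
by congr (_ *m diag_mx _ *m _); apply/matrixP => i j; rewrite !mxE ord1.
Qed.

Lemma udiagM (mu nu : 'rV[C]_n) :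
  udiag mu *m udiag nu = udiag (\row_i (mu 0 i * nu 0 i)).
Proof.
move/unitarymxP: U_unitary => UU.
by rewrite -!mulmxA (mulmxA U) UU mul1mx (mulmxA (diag_mx mu)) mulmx_diag !mulmxA.
Qed.

Lemma nuc_norm_udiag (mu : 'rV[C]_n) : nuc_norm (udiag mu) = \sum_i `|mu 0 i|.
Proof.
set A := (udiag mu)^t* *m udiag mu; set w := \row_i (`|mu 0 i| ^+ 2).
have A_udiag : A = invmx U *m diag_mx w *m U.
  rewrite /A udiag_adj udiagM invmx_unitary //.
  by congr (_ *m diag_mx _ *m _); apply/matrixP => i j; rewrite !mxE normCK mulrC.
have A_normal : A \is normalmx by apply/orthomx_spectral_subproof; exists (U, w).
have spec_w : perm_eq [seq spectral_diag A 0 i | i : 'I_n] [seq w 0 i | i : 'I_n].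
  apply: similar_diag_perm_eq (spectral_unit A) (unitarymx_unit U_unitary) _.
  by rewrite -(orthomx_spectralP A_normal).
rewrite /nuc_norm -/A -(big_image _ _ _ _ sqrtC) (perm_big _ spec_w) big_image.
by apply: eq_bigr => i _; rewrite mxE sqrCK.
Qed.

Lemma frob_norm_udiag (mu : 'rV[C]_n) :
  frob_norm (udiag mu) = sqrtC (\sum_i `|mu 0 i| ^+ 2).
Proof.
rewrite /frob_norm; congr sqrtC.
have -> : \sum_i \sum_j `|udiag mu i j| ^+ 2 = \tr (udiag mu *m (udiag mu)^t*).
  by apply: eq_bigr => i _; rewrite mxE; apply: eq_bigr => j _; rewrite !mxE normCK.
rewrite udiag_adj udiagM mxtrace_mulC mulmxA.
move/unitarymxP: U_unitary => ->; rewrite mul1mx mxtrace_diag.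
by apply: eq_bigr => i _; rewrite !mxE normCK.
Qed.

End UnitaryDiagonal.

Section SpectralTruncation.
Context {C : numClosedFieldType} {d r : nat} {Z Zr : 'M[C]_d}.
Hypothesis Zr_trunc : spectral_trunc r Z Zr.

Lemma nuc_norm_trunc_split : nuc_norm Z = nuc_norm Zr + nuc_norm (Z - Zr).
Proof.
case: Zr_trunc => U [lam [S [[U_unitary _] -> _ _ ->]]].
rewrite -mulmxBl -mulmxBr -raddfB row_maskC !nuc_norm_udiag //.
rewrite !sum_row_mask ?normr0 // (bigID (mem S)) /=.
by congr (_ + _); apply: eq_bigl => i; rewrite in_setC.
Qed.

Lemma nuc_norm_trunc_ge0 : 0 <= nuc_norm Z.
Proof.
case: Zr_trunc => U [lam [S [[U_unitary _] -> _ _ _]]].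
by rewrite nuc_norm_udiag // sumr_ge0.
Qed.

Lemma nuc_norm_trunc_le : nuc_norm Zr <= sqrtC r%:R * frob_norm Zr.
Proof.
case: Zr_trunc => U [lam [S [[U_unitary _] _ <- _ ->]]]; rewrite -/(row_mask S lam).
rewrite nuc_norm_udiag // frob_norm_udiag // sum_row_mask ?normr0 //.
rewrite (sum_row_mask _ _ (fun x => `|x| ^+ 2)) ?normr0 ?expr0n //.
rewrite -(ler_pXn2r (n := 2)) ?nnegrE ?sumr_ge0 ?mulr_ge0 ?sqrtC_ge0 ?ler0n //.
  by rewrite exprMn !sqrtCK; apply: sqr_sum_le_card_sum_sqr => i; exact: normr_real.
by rewrite sumr_ge0 // => i _; rewrite exprn_ge0.
Qed.

Lemma frob_norm_trunc_le : frob_norm Zr <= frob_norm Z.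
Proof.
case: Zr_trunc => U [lam [S [[U_unitary _] -> _ _ ->]]]; rewrite -/(row_mask S lam).
rewrite !frob_norm_udiag // (sum_row_mask _ _ (fun x => `|x| ^+ 2)) ?normr0 ?expr0n //.
have sqr_ge0 i : 0 <= `|lam 0 i| ^+ 2 by rewrite exprn_ge0.
by rewrite ler_sqrtC ?nnegrE ?sumr_ge0 // [leRHS](bigID (mem S)) /= lerDl sumr_ge0.
Qed.

Lemma nuc_norm_le_trunc {rho : C} : 0 < rho -> (0 < r)%N ->
  rho / sqrtC r%:R * nuc_norm (Z - Zr) <= frob_norm Zr ->
  nuc_norm Z <= (rho + 1) / rho * sqrtC r%:R * frob_norm Z.
Proof.
move=> rho_gt0 r_gt0; set s := sqrtC r%:R; set F := frob_norm Zr => Zc_le.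
have s_gt0 : 0 < s by rewrite sqrtC_gt0 ltr0n.
have Zc_bound : nuc_norm (Z - Zr) <= s * F / rho.
  by rewrite mulrAC -ler_pdivrMl ?divr_gt0 // invf_div.
rewrite nuc_norm_trunc_split.
apply: le_trans (lerD nuc_norm_trunc_le Zc_bound) _.
have -> : s * F + s * F / rho = (rho + 1) / rho * s * F.
  by field; rewrite gt_eqF.
by rewrite ler_wpM2l ?frob_norm_trunc_le // mulr_ge0 ?divr_ge0 ?addr_ge0 ?ltW.
Qed.

End SpectralTruncation.

Theorem lemma1 (C : numClosedFieldType) (d r : nat) (rho : C)
    (Z Zr : 'M[C]_d) :
  0 < rho -> rho < 1 -> (1 <= r)%N -> (r <= d)%N ->
  Z \is hermsymmx ->
  spectral_trunc r Z Zr ->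
  (* Z in T_{rho,r}, with Z_c = Z - Z_r *)
  rho / sqrtC r%:R * nuc_norm (Z - Zr) < frob_norm Zr ->
  frob_norm Z = 1 ->
  nuc_norm Z ^+ 2 / frob_norm Z ^+ 2 <= ((rho + 1) / rho) ^+ 2 * r%:R.
Proof.
move=> rho_gt0 _ r_gt0 _ _ Zr_trunc /ltW Zc_le Z_unit.
have nuc_le := nuc_norm_le_trunc Zr_trunc rho_gt0 r_gt0 Zc_le.
rewrite Z_unit expr1n divr1 -(sqrtCK r%:R) -exprMn.
rewrite ler_pXn2r ?nnegrE ?(nuc_norm_trunc_ge0 Zr_trunc) //.
  by rewrite Z_unit mulr1 in nuc_le.
by rewrite mulr_ge0 ?divr_ge0 ?addr_ge0 ?sqrtC_ge0 ?ler01 ?ler0n ?ltW.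
Qed.
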